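(* Let $D=2$, $0<p\le1$, and $\kappa(\theta,\theta')=\varphi(\|\theta-\theta'\|_p^p)$ with $\varphi(x)=\frac1{1+x}$. For $\Delta>0$ let $\mathcal G_\Delta=\{0,\Delta\}\times\{0,\Delta\}\subset\mathbb R^2$. Then there exists $\Delta>0$ such that $\mathcal G_\Delta$ is not axis admissible with respect to $\kappa$.
   Context: $\|\theta\|_p^p=\sum_d|\theta[d]|^p$. A Cartesian grid is $\mathcal G=\prod_{d=1}^D\mathcal S_d$ with $\mathcal S_d\subset\mathbb R$ finite. $\mathcal G=\{\theta_\ell\}_{\ell=1}^{|\mathcal G|}$ is axis admissible w.r.t. $\kappa$ if for every $d\in\{1,\dots,D\}$, every $\theta\in\mathbb R^D$ with $\theta[d]=0$ and every real coefficients $\{c_\ell\}$ such that $f_d(t)=|\sum_\ell c_\ell\kappa(\theta+t\mathbf e_d,\theta_\ell)|$ is not identically zero on $\mathbb R$, one has $\emptyset\ne\arg\max_{t\in\mathbb R}f_d(t)\subseteq\mathcal S_d$ ($\mathbf e_d$ the $d$-th canonical basis vector). *)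

From Stdlib Require Import Reals Lra List.
Import ListNotations.
Open Scope R_scope.

Definition pt : Type := (R * R)%type.

(* d-th coordinate, d in {1,2} (any d <> 1 is read as coordinate 2). *)
Definition coord (d : nat) (x : pt) : R :=
  if Nat.eqb d 1 then fst x else snd x.

Definition shift (d : nat) (x : pt) (t : R) : pt :=
  if Nat.eqb d 1 then (fst x + t, snd x) else (fst x, snd x + t).

(* |x|^p with the convention |0|^p = 0 (p > 0). *)
Definition powabs (x p : R) : R :=
  if Req_EM_T x 0 then 0 else Rpower (Rabs x) p.

Definition lpp (p : R) (x y : pt) : R :=
  powabs (fst x - fst y) p + powabs (snd x - snd y) p.

Definition phi (x : R) : R := 1 / (1 + x).

Definition kappa_p (p : R) (x y : pt) : R := phi (lpp p x y).

Definition grid (S1 S2 : list R) : list pt := list_prod S1 S2.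

Definition side (d : nat) (S1 S2 : list R) : list R :=
  if Nat.eqb d 1 then S1 else S2.

Definition fdir (kappa : pt -> pt -> R) (G : list pt) (d : nat)
  (theta : pt) (c : pt -> R) (t : R) : R :=
  Rabs (fold_right (fun l acc => c l * kappa (shift d theta t) l + acc) 0 G).

Definition is_argmax (f : R -> R) (t : R) : Prop := forall s, f s <= f t.

Definition axis_admissible (kappa : pt -> pt -> R) (S1 S2 : list R) : Prop :=
  forall d : nat, (d = 1%nat \/ d = 2%nat) ->
  forall (theta : pt), coord d theta = 0 ->
  forall (c : pt -> R),
    (exists t, fdir kappa (grid S1 S2) d theta c t <> 0) ->
    (exists t, is_argmax (fdir kappa (grid S1 S2) d theta c) t) /\
    (forall t, is_argmax (fdir kappa (grid S1 S2) d theta c) t -> In t (side d S1 S2)).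

From Stdlib Require Import Reals List Lra.
Import ListNotations.
Open Scope R_scope.

(* Take Delta = 1, the axis d = 1 through theta = (0,0), and put
   weight 1 on the grid point (0,0), weight -2 on (0,1), weight 0 elsewhere.
   Writing s = |t|^p, the section t |-> f_1(t) becomes
       | 1/(1+s) - 2/(2+s) | = s / ((1+s)(2+s)) =: profile s,
   which is not identically zero.  Axis admissibility would force a maximiser
   of f_1 inside the grid side {0, 1}, i.e. with s in {0, 1}; but profile 0 = 0,
   profile 1 = 1/6, while profile (3/2) = 6/35 > 1/6 and s = 3/2 is attained by
   t = (3/2)^(1/p).  The argument works for every
   p > 0. *)

Lemma Rpower_1_base (p : R) : Rpower 1 p = 1.
Proof. unfold Rpower; rewrite ln_1, Rmult_0_r; apply exp_0. Qed.

Lemma powabs_nonneg (x p : R) : 0 <= powabs x p.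
Proof.
  unfold powabs; destruct (Req_EM_T x 0); [lra|].
  unfold Rpower; left; apply exp_pos.
Qed.

Lemma powabs_0 (p : R) : powabs 0 p = 0.
Proof. unfold powabs; destruct (Req_EM_T 0 0); [reflexivity | lra]. Qed.

Lemma powabs_opp (x p : R) : powabs (- x) p = powabs x p.
Proof.
  unfold powabs; rewrite Rabs_Ropp.
  destruct (Req_EM_T (- x) 0), (Req_EM_T x 0); reflexivity || lra.
Qed.

Lemma powabs_1 (p : R) : powabs 1 p = 1.
Proof.
  unfold powabs; destruct (Req_EM_T 1 0); [lra|].
  rewrite Rabs_R1; apply Rpower_1_base.
Qed.

Lemma powabs_root (s p : R) : 0 < s -> 0 < p -> powabs (Rpower s (1 / p)) p = s.
Proof.
  intros hs hp.
  assert (hpos : 0 < Rpower s (1 / p)) by (unfold Rpower; apply exp_pos).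
  unfold powabs; destruct (Req_EM_T (Rpower s (1 / p)) 0); [lra|].
  rewrite Rabs_right, Rpower_mult by lra.
  replace (1 / p * p) with 1 by (field; lra).
  now apply Rpower_1.
Qed.

Definition witness_coef (l : pt) : R :=
  if Req_EM_T (fst l) 0 then (if Req_EM_T (snd l) 0 then 1 else -2) else 0.

(* The modulus of phi(s) - 2 phi(s + 1), as a function of s = |t|^p. *)
Definition profile (s : R) : R := s / ((1 + s) * (2 + s)).

Lemma witness_section (p t : R) :
  fdir (kappa_p p) (grid [0; 1] [0; 1]) 1 (0, 0) witness_coef t
  = profile (powabs t p).
Proof.
  unfold fdir, grid, kappa_p, lpp, shift, witness_coef, phi; simpl.
  destruct (Req_EM_T 0 0) as [_|]; [|lra].
  destruct (Req_EM_T 1 0) as [|_]; [lra|].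
  replace (0 + t - 0) with t by ring.
  replace (0 - 0) with 0 by ring.
  replace (0 - 1) with (- (1)) by ring.
  rewrite powabs_opp, powabs_0, powabs_1.
  pose proof (powabs_nonneg t p) as hs.
  pose proof (powabs_nonneg (0 + t - 1) p).
  set (s := powabs t p) in *.
  transitivity (Rabs (- profile s)).
  - f_equal; unfold profile; field; repeat split; lra.
  - rewrite Rabs_Ropp, Rabs_right; [reflexivity|].
    unfold profile, Rdiv; apply Rle_ge, Rle_mult_inv_pos; nra.
Qed.

Lemma profile_0 : profile 0 = 0.
Proof. unfold profile; field. Qed.

Lemma profile_1_lt : profile 1 < profile (3 / 2).
Proof. unfold profile; lra. Qed.

Theorem mainTheorem17 (p : R) (hp0 : 0 < p) (hp1 : p <= 1) :
  exists Delta : R, 0 < Delta /\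
    ~ axis_admissible (kappa_p p) [0; Delta] [0; Delta].
Proof.
  exists 1; split; [lra|]; intro Hadm.
  set (t_best := Rpower (3 / 2) (1 / p)).
  assert (Hbest : powabs t_best p = 3 / 2) by (apply powabs_root; lra).
  destruct (Hadm 1%nat (or_introl eq_refl) (0, 0) eq_refl witness_coef)
    as [[t0 Hmax] Hin].
  { exists 1; rewrite witness_section, powabs_1; unfold profile; lra. }
  pose proof (Hmax t_best) as Hle.
  rewrite !witness_section, Hbest in Hle.
  pose proof profile_1_lt.
  destruct (Hin t0 Hmax) as [<-|[<-|[]]].
  - pose proof (Hmax 1) as H1.
    rewrite !witness_section, powabs_0, powabs_1, profile_0 in H1.
    unfold profile in *; lra.
  - rewrite powabs_1 in Hle; lra.
Qed.
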